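(* Let $C(\mathbf{x})$ be a $\Sigma\Pi\Sigma$ circuit of formal degree $d$ and top fan-in $s$. Then for every $k$ and every partition of $\mathbf{x}$ into $\mathbf{y}$ and $\mathbf{z}$, $\Gamma^{\mathrm{SED}}_{k,0}(C)\le s\cdot 2^d$.
   Context: A $\Sigma\Pi\Sigma$ circuit computes $\sum_{i=1}^{s}\prod_{j=1}^{d_i}L_{i,j}$ with each $L_{i,j}$ an affine form; $s$ is its top fan-in and $\max_i d_i$ its formal degree. For a partition $\mathbf{x}=\mathbf{y}\sqcup\mathbf{z}$ with $|\mathbf{y}|=n_y$, $|\mathbf{z}|=n_z$, the shifted evaluation dimension of a polynomial $P$ is $\Gamma^{\mathrm{SED}}_{k,\ell}(P)=\dim \mathrm{Span}\{\mathrm{Eval}_{\{0,1\}^{n_z}}(m\cdot P(\mathbf{a},\mathbf{z})) : m$ a monomial of degree exactly $\ell$ in $\mathbf{z},\ \mathbf{a}\in\{0,1\}^{n_y}$ with at most $k$ ones$\}$, where $\mathrm{Eval}_{\{0,1\}^{n_z}}(f)$ is the vector of values of $f$ on $\{0,1\}^{n_z}$; $\Gamma^{\mathrm{SED}}_{k,0}(C)$ means this quantity for the polynomial computed by $C$. *)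

From HB Require Import structures.
From mathcomp Require Import all_boot all_order all_algebra.
Unset Printing Implicit Defensive.
Import GRing.Theory.
Local Open Scope ring_scope.

Section SPS.
Variables (F : fieldType) (n : nat).

Record affine := Affine { acoef : {ffun 'I_n -> F}; aconst : F }.

Definition aeval (L : affine) (x : 'I_n -> F) : F :=
  \sum_(i < n) acoef L i * x i + aconst L.

Record sps := SPS {
  top_fanin : nat;
  mult_deg : 'I_top_fanin -> nat;
  forms : forall i : 'I_top_fanin, 'I_(mult_deg i) -> affine }.

Definition formal_degree (C : sps) : nat := (\max_(i < top_fanin C) mult_deg C i)%N.

Definition ceval (C : sps) (x : 'I_n -> F) : F :=
  \sum_(i < top_fanin C) \prod_(j < mult_deg C i) aeval (forms C i j) x.

Variable S : {set 'I_n}.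
Definition yvar := {i : 'I_n | i \in S}.
Definition zvar := {i : 'I_n | i \notin S}.

(* the point (a, b) with y := a and z := b *)
Definition merge (a : {ffun yvar -> bool}) (b : {ffun zvar -> bool}) (i : 'I_n) : bool :=
  match (insub i : option yvar) with
  | Some j => a j
  | None => match (insub i : option zvar) with Some j => b j | None => false end
  end.

(* monomials in z of degree exactly l, given by their exponent vectors *)
Definition zmonomials (l : nat) : seq {ffun zvar -> 'I_l.+1} :=
  [seq m : {ffun zvar -> 'I_l.+1} <- enum {ffun zvar -> 'I_l.+1} | (\sum_j nat_of_ord (m j))%N == l].

Definition yassign (k : nat) : seq {ffun yvar -> bool} :=
  [seq a : {ffun yvar -> bool} <- enum {ffun yvar -> bool} | #|[set j | a j]| <= k]%N.

(* Eval_{{0,1}^{n_z}} (m * C(a, z)) *)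
Definition sed_vec (C : sps) (l : nat) (m : {ffun zvar -> 'I_l.+1})
  (a : {ffun yvar -> bool}) : {ffun {ffun zvar -> bool} -> F^o} :=
  [ffun b : {ffun zvar -> bool} => (\prod_(j : zvar) ((b j)%:R : F) ^+ (m j : nat))
             * ceval C (fun i => (merge a b i)%:R)].

Definition SED (k l : nat) (C : sps) : nat :=
  \dim (span [seq sed_vec C l m a | m <- zmonomials l, a <- yassign k]).

End SPS.

Arguments Affine {F n}.
Arguments acoef {F n}.
Arguments aconst {F n}.
Arguments aeval {F n}.
Arguments SPS {F n}.
Arguments top_fanin {F n}.
Arguments mult_deg {F n}.
Arguments forms {F n}.
Arguments formal_degree {F n}.
Arguments ceval {F n}.
Arguments merge {n S}.
Arguments SED {F n}.

From Pilot Require Import Defs.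
From mathcomp Require Import all_boot all_order all_algebra.
Import GRing.Theory.
Local Open Scope ring_scope.

(** Every affine form splits as [L(a, b) = L(a, 0) + L0(b)] with [L0] linear in
  the z-variables. Expanding a product gate [\prod_(j < d_i) (L_j(a, 0) + L0_j(b))]
  gives a combination, with coefficients depending on [a] only, of the [2 ^ d_i]
  products [\prod_(j in J) L0_j(b)] for [J] a subset of the gate's inputs. Hence
  all the vectors whose span defines [SED S k 0 C] lie in the span of at most
  [s * 2 ^ d] fixed functions of [b]. *)

Section SubsetProducts.
Context {F : fieldType} {T : finType}.

Definition subset_products {I : finType} (y : I -> T -> F) : seq {ffun T -> F^o} :=
  [seq [ffun t => \prod_(i in J) y i t : F^o] | J : {set I}].

Lemma size_subset_products {I : finType} (y : I -> T -> F) :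
  size (subset_products y) = (2 ^ #|I|)%N.
Proof. by rewrite size_map -cardE -(cardsT {set I}) -powersetT card_powerset cardsT. Qed.

Lemma prod_shifted_in_span {I : finType} (x : I -> F) (y : I -> T -> F) :
  [ffun t => \prod_i (x i + y i t) : F^o] \in <<subset_products y>>%VS.
Proof.
have -> : [ffun t => \prod_i (x i + y i t) : F^o] =
    \sum_(J : {set I})
      (\prod_(i | i \notin J) x i) *: [ffun t => \prod_(i in J) y i t : F^o].
  apply/ffunP => t; rewrite ffunE sum_ffunE.
  under eq_bigr do rewrite addrC.
  rewrite bigA_distr; apply: eq_bigr => J _.
  by rewrite !ffunE big_if /= mulrC.
apply: memv_suml => J _; apply/memvZ/memv_span.
by apply: map_f; rewrite mem_enum.
Qed.

End SubsetProducts.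

Section CircuitSplit.
Context {F : fieldType} {n : nat} (S : {set 'I_n}).

Definition ypart (a : {ffun yvar n S -> bool}) (i : 'I_n) : F :=
  if insub i is Some j then (a j)%:R else 0.

Definition zpart (b : {ffun zvar n S -> bool}) (i : 'I_n) : F :=
  if insub i is Some j then (b j)%:R else 0.

Lemma merge_natrE a b i : ((Defs.merge a b i)%:R : F) = ypart a i + zpart b i.
Proof.
rewrite /Defs.merge /ypart /zpart; case: insubP => [j Sj _|nSi].
  by rewrite insubF ?Sj // addr0.
by case: insub => [j|] /=; rewrite add0r.
Qed.

Definition zlin (L : affine F n) b : F := \sum_(i < n) acoef L i * zpart b i.

Lemma aeval_merge L a b :
  aeval L (fun i => (Defs.merge a b i)%:R) = aeval L (ypart a) + zlin L b.
Proof.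
rewrite /aeval /zlin; under eq_bigr do rewrite merge_natrE mulrDr.
by rewrite big_split /= addrAC.
Qed.

Definition gate_products (C : sps F n) : seq {ffun {ffun zvar n S -> bool} -> F^o} :=
  flatten [seq subset_products (fun j => zlin (forms C i j))
          | i <- enum 'I_(top_fanin C)].

Lemma size_gate_products C :
  (size (gate_products C) <= top_fanin C * 2 ^ formal_degree C)%N.
Proof.
rewrite size_flatten sumnE !big_map -[X in (_ <= X * _)%N]card_ord -sum_nat_const.
apply: leq_sum => i _; rewrite size_subset_products card_ord.
by rewrite leq_pexp2l // (leq_bigmax i).
Qed.

Lemma sed_vec0_in_span C m a : sed_vec F n S C 0 m a \in <<gate_products C>>%VS.
Proof.
have -> : sed_vec F n S C 0 m a = \sum_(i < top_fanin C)
    [ffun b => \prod_j (aeval (forms C i j) (ypart a) + zlin (forms C i j) b)].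
  apply/ffunP => b; rewrite ffunE sum_ffunE.
  (* the only monomial of degree 0 is 1: all exponents lie in ['I_1] *)
  rewrite big1 ?mul1r => [|j _]; last by case: (m j) => -[].
  apply: eq_bigr => i _; rewrite ffunE; apply: eq_bigr => j _; exact: aeval_merge.
apply: memv_suml => i _.
have gate_sub : {subset subset_products (fun j => zlin (forms C i j)) <= gate_products C}.
  move=> v v_i; apply/flattenP.
  exists (subset_products (fun j => zlin (forms C i j))) => //.
  by apply/mapP; exists i; rewrite ?mem_enum.
exact: (subvP (sub_span gate_sub)) _ (prod_shifted_in_span _ _).
Qed.

End CircuitSplit.

Theorem lemma6p2 (F : fieldType) (n : nat) (C : sps F n) (d s : nat) :
  formal_degree C = d -> top_fanin C = s ->
  forall (k : nat) (S : {set 'I_n}), (SED S k 0 C <= s * 2 ^ d)%N.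
Proof.
move=> <- <- k S; apply: leq_trans (size_gate_products S C).
apply: leq_trans (dim_span _); apply/dimvS/span_subvP => v.
by case/allpairsP => -[m a] [_ _ ->]; apply: sed_vec0_in_span.
Qed.
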